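(* Let $f:\mathbb{R}^2\to\mathbb{R}$ be a $C^\infty$ function that vanishes on the Hawaiian earring \[ \mathcal H=\bigcup_{n\ge1} C_n, \qquad C_n=\left\{(x,y)\in\mathbb{R}^2:\left(x-\tfrac1n\right)^2+y^2=\tfrac1{n^2}\right\}. \] Then $f$ is flat at the origin, i.e. \[ \frac{\partial^{\alpha_1+\alpha_2} f}{\partial x_1^{\alpha_1}\partial x_2^{\alpha_2}}(0,0)=0 \qquad \text{for all } (\alpha_1,\alpha_2)\in\mathbb{N}^2. \] *)

From Stdlib Require Import Reals List.
From Coquelicot Require Import Coquelicot.
Open Scope R_scope.

Definition line (g : R * R -> R) (i : bool) (p : R * R) : R -> R :=
  fun t => if i then g (fst p, t) else g (t, snd p).

Definition coord (i : bool) (p : R * R) : R := if i then snd p else fst p.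

Definition pd (i : bool) (g : R * R -> R) : R * R -> R :=
  fun p => Derive (line g i p) (coord i p).

Definition pdw (w : list bool) (g : R * R -> R) : R * R -> R :=
  fold_right pd g w.

Definition smooth2 (f : R * R -> R) : Prop :=
  forall w : list bool,
    (forall p, continuous (pdw w f) p) /\
    (forall (i : bool) p, ex_derive (line (pdw w f) i p) (coord i p)).

Definition circle_C (n : nat) (p : R * R) : Prop :=
  (fst p - / INR n) ^ 2 + (snd p) ^ 2 = / (INR n) ^ 2.

Definition hawaiian (p : R * R) : Prop :=
  exists n : nat, (1 <= n)%nat /\ circle_C n p.

Definition partial (a1 a2 : nat) (f : R * R -> R) : R * R -> R :=
  pdw (repeat false a1 ++ repeat true a2) f.

(* Fix b and n, let g = d^b f / dy^b and N = b + 2n.  On the vertical line x = t, for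
   small t > 0, the circles C_1, ..., C_N cross the upper half plane at N distinct heights
   in (0, sqrt (2 t)], where f vanishes.  By Rolle, d^j f / dy^j (t, .) keeps N - j roots
   there, and integrating back from d^N f / dy^N, which is bounded near the origin, gives
   |g (t, 0)| <= M (sqrt (2 t))^(2n) = M 2^n t^n.  So x |-> g (x, 0) decays faster than
   any power as x -> 0+, and Taylor-Lagrange forces all its x-derivatives to vanish at 0. *)
From Stdlib Require Import Reals List Lra Lia.
From Coquelicot Require Import Coquelicot.
Open Scope R_scope.

Lemma ex_derive_continuity_pt (g : R -> R) (x : R) :
  ex_derive g x -> continuity_pt g x.
Proof.
  intros Hg. apply continuity_pt_filterlim, (ex_derive_continuous g x Hg).
Qed.

Lemma continuous_eq0_of_small (g : R -> R) (B : R) :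
  continuous g 0 ->
  (forall delta, 0 < delta -> exists z, Rabs z <= delta /\ Rabs (g z) <= B * delta) ->
  g 0 = 0.
Proof.
  intros Hc Hsmall. apply Req_lt_aux. intros eps. rewrite Rminus_0_r.
  destruct (proj1 (filterlim_locally g (g 0)) Hc (pos_div_2 eps)) as [d Hd].
  assert (HB : 0 < Rabs B + 1) by (pose proof (Rabs_pos B); lra).
  pose proof (cond_pos d) as Hd0. pose proof (cond_pos eps) as Heps.
  set (delta := Rmin (d / 2) (eps / (2 * (Rabs B + 1)))).
  assert (Hdelta0 : 0 < delta).
  { apply Rmin_glb_lt; [lra | apply Rdiv_lt_0_compat; lra]. }
  assert (Hdelta : (Rabs B + 1) * delta <= eps / 2).
  { apply Rle_trans with ((Rabs B + 1) * (eps / (2 * (Rabs B + 1)))).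
    - apply Rmult_le_compat_l; [lra | apply Rmin_r].
    - right. field. lra. }
  destruct (Hsmall delta Hdelta0) as [z [Hz Hgz]].
  assert (Hball : Rabs (g z - g 0) < eps / 2).
  { apply (Hd z). unfold ball; simpl; unfold AbsRing_ball, abs, minus, plus, opp; simpl.
    rewrite Ropp_0, Rplus_0_r. assert (delta <= d / 2) by apply Rmin_l. lra. }
  pose proof (Rabs_triang_inv (g 0) (g z)) as Htri. rewrite Rabs_minus_sym in Htri.
  pose proof (Rmult_le_compat_r delta _ _ (Rlt_le _ _ Hdelta0) (Rle_abs B)). lra.
Qed.

Lemma continuous_locally_bounded (G : R * R -> R) (p : R * R) :
  continuous G p ->
  exists M d, 0 < d /\ forall q, Rabs (fst q - fst p) < d -> Rabs (snd q - snd p) < d ->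
    Rabs (G q) <= M.
Proof.
  intros HG.
  destruct (proj1 (filterlim_locally G (G p)) HG (mkposreal 1 Rlt_0_1)) as [d Hd].
  exists (Rabs (G p) + 1), d. split; [apply cond_pos |].
  intros q Hx Hy. assert (Hq : Rabs (G q - G p) < 1) by exact (Hd q (conj Hx Hy)).
  pose proof (Rabs_triang_inv (G q) (G p)). lra.
Qed.

Lemma Rabs_bound_from_root (g : R -> R) (a b z B : R) :
  (forall x, ex_derive g x) -> a <= z <= b -> g z = 0 ->
  (forall x, a <= x <= b -> Rabs (Derive g x) <= B) ->
  forall x, a <= x <= b -> Rabs (g x) <= B * (b - a).
Proof.
  intros Hg Hz Hgz HB x Hx.
  destruct (MVT_gen g z x (Derive g) (fun y _ => Derive_correct g y (Hg y))
              (fun y _ => ex_derive_continuity_pt g y (Hg y))) as [c [Hc Heq]].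
  rewrite Hgz, Rminus_0_r in Heq. rewrite Heq, Rabs_mult.
  assert (Hcab : a <= c <= b).
  { split.
    - apply Rle_trans with (Rmin z x); [apply Rmin_glb; lra | apply Hc].
    - apply Rle_trans with (Rmax z x); [apply Hc | apply Rmax_lub; lra]. }
  apply Rmult_le_compat; try apply Rabs_pos.
  - apply HB, Hcab.
  - apply Rabs_le. lra.
Qed.

Fixpoint has_roots (g : R -> R) (k : nat) (a b : R) : Prop :=
  match k with
  | O => True
  | S k => exists z, a < z <= b /\ g z = 0 /\ has_roots g k z b
  end.

Lemma has_roots_ext (g1 g2 : R -> R) (k : nat) (a b : R) :
  (forall x, g1 x = g2 x) -> has_roots g1 k a b -> has_roots g2 k a b.
Proof.
  intros Hg. revert a. induction k as [|k IH]; simpl; [tauto |].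
  intros a [z [Hz [Hgz Hrest]]]. exists z. rewrite <- Hg. auto.
Qed.

Lemma has_roots_Derive (g : R -> R) (k : nat) (a b : R) :
  (forall x, ex_derive g x) -> has_roots g (S k) a b -> has_roots (Derive g) k a b.
Proof.
  intros Hg. revert a. induction k as [|k IH]; simpl; [tauto |].
  intros a [z1 [Hz1 [Hgz1 [z2 [Hz2 [Hgz2 Hrest]]]]]].
  destruct (Rolle g z1 z2 (fun x _ => ex_derive_Reals_0 g x (Hg x))
              (fun x _ => ex_derive_continuity_pt g x (Hg x)) (proj1 Hz2)
              (eq_trans Hgz1 (eq_sym Hgz2))) as [w [Hw Hw0]].
  rewrite Derive_Reals in Hw0.
  exists w. split; [lra | split; [exact Hw0 |]].
  apply IH. exists z2. split; [lra | auto].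
Qed.

Lemma has_roots_of_decreasing (g : R -> R) (u : nat -> R) (b : R) (N : nat) :
  (forall k, (1 <= k <= N)%nat -> u k <= b /\ g (u k) = 0) ->
  (forall k, (1 <= k < N)%nat -> u (S k) < u k) ->
  forall a, a < u N -> has_roots g N a b.
Proof.
  induction N as [|N IH]; simpl; [tauto |].
  intros Hroots Hdecr a Ha.
  destruct (Hroots (S N)) as [Hub Hu0]; [lia |].
  exists (u (S N)). split; [lra | split; [exact Hu0 |]].
  destruct N as [|N]; simpl; [tauto |].
  apply IH.
  - intros k Hk. apply Hroots. lia.
  - intros k Hk. apply Hdecr. lia.
  - apply Hdecr. lia.
Qed.

Section DerivativeChain.

Variable h : nat -> R -> R.
Hypothesis h_ex_derive : forall j x, ex_derive (h j) x.
Hypothesis h_Derive : forall j x, Derive (h j) x = h (S j) x.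

Lemma has_roots_Derive_chain (j k : nat) (a b : R) :
  has_roots (h j) (S k) a b -> has_roots (h (S j)) k a b.
Proof.
  intros Hroots. apply has_roots_ext with (Derive (h j)); [apply h_Derive |].
  apply has_roots_Derive; auto.
Qed.

Lemma has_roots_chain (j L : nat) (a b : R) :
  has_roots (h 0) (j + L) a b -> has_roots (h j) L a b.
Proof.
  revert L. induction j as [|j IH]; intros L Hroots; [exact Hroots |].
  apply has_roots_Derive_chain, IH. rewrite Nat.add_succ_r. exact Hroots.
Qed.

Lemma chain_bound_from_roots (a b M : R) (L j : nat) :
  (forall x, a <= x <= b -> Rabs (h (j + L) x) <= M) ->
  has_roots (h j) L a b ->
  forall x, a <= x <= b -> Rabs (h j x) <= M * (b - a) ^ L.
Proof.
  revert j. induction L as [|L IH]; intros j HM Hroots x Hx.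
  - rewrite Rmult_1_r, <- (Nat.add_0_r j). apply HM, Hx.
  - destruct Hroots as [z [Hz [Hz0 Hrest]]].
    assert (Hderiv : forall y, a <= y <= b -> Rabs (Derive (h j) y) <= M * (b - a) ^ L).
    { intros y Hy. rewrite h_Derive. apply IH; auto.
      - intros y' Hy'. rewrite Nat.add_succ_comm. apply HM, Hy'.
      - apply has_roots_Derive_chain. exists z. auto. }
    replace (M * (b - a) ^ S L) with (M * (b - a) ^ L * (b - a)) by (simpl; ring).
    apply (Rabs_bound_from_root (h j) a b z); auto. lra.
Qed.

Lemma Derive_n_chain (m : nat) (x : R) : Derive_n (h 0) m x = h m x.
Proof.
  revert x. induction m as [|m IH]; intros x; simpl; [reflexivity |].
  rewrite (Derive_ext _ (h m) _ IH). apply h_Derive.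
Qed.

Lemma chain_Taylor_at_0 (a : nat) (y : R) :
  0 < y -> (forall m, (m < a)%nat -> h m 0 = 0) ->
  exists z, 0 < z <= y /\ h 0 y = y ^ a / INR (Factorial.fact a) * h a z.
Proof.
  intros Hy Hlow. destruct a as [|n].
  - exists y. split; [lra |]. simpl. field.
  - destruct (Taylor_Lagrange (h 0) n 0 y Hy) as [z [Hz Heq]].
    { intros t _ k _. destruct k as [|k]; simpl; [exact I |].
      apply ex_derive_ext with (h k); [intros x; rewrite Derive_n_chain; reflexivity |].
      apply h_ex_derive. }
    exists z. split; [lra |].
    rewrite Heq, sum_eq_R0, Derive_n_chain, Rminus_0_r, Rplus_0_l; [reflexivity |].
    intros m Hm. rewrite Derive_n_chain, Hlow by lia. ring.
Qed.

Lemma chain_flat_at_0 :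
  (forall n, exists C eps, 0 < eps /\ forall x, 0 < x < eps -> Rabs (h 0 x) <= C * x ^ n) ->
  forall a, h a 0 = 0.
Proof.
  intros Hdecay a. induction a as [a IHa] using (well_founded_induction Wf_nat.lt_wf).
  destruct (Hdecay (S a)) as [C [eps [Heps HC]]].
  assert (Hfact : 0 < INR (Factorial.fact a)) by apply lt_0_INR, Factorial.lt_O_fact.
  apply (continuous_eq0_of_small _ (INR (Factorial.fact a) * Rabs C)).
  { apply (ex_derive_continuous (h a) 0 (h_ex_derive a 0)). }
  intros delta Hdelta. set (y := Rmin delta (eps / 2)).
  assert (Hy0 : 0 < y) by (apply Rmin_glb_lt; lra).
  assert (Hyd : y <= delta) by apply Rmin_l.
  assert (Hye : y <= eps / 2) by apply Rmin_r.
  destruct (chain_Taylor_at_0 a y Hy0 (fun m Hm => IHa m Hm)) as [z [Hz Heq]].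
  assert (Hya : 0 < y ^ a) by (apply pow_lt; lra).
  assert (Hhaz : h a z = h 0 y * INR (Factorial.fact a) / y ^ a) by (rewrite Heq; field; lra).
  exists z. split; [rewrite Rabs_pos_eq; lra |].
  assert (Hbound : Rabs (h 0 y) <= Rabs C * y ^ a * y).
  { apply Rle_trans with (C * y ^ S a); [apply HC; lra |].
    rewrite <- tech_pow_Rmult. replace (Rabs C * y ^ a * y) with (Rabs C * (y * y ^ a)) by ring.
    apply Rmult_le_compat_r; [nra | apply Rle_abs]. }
  rewrite Hhaz. unfold Rdiv.
  rewrite !Rabs_mult, Rabs_inv, (Rabs_pos_eq (INR _)), (Rabs_pos_eq (y ^ a)) by lra.
  apply Rle_trans with (INR (Factorial.fact a) * Rabs C * y).
  - replace (INR (Factorial.fact a) * Rabs C * y)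
      with (Rabs C * y ^ a * y * INR (Factorial.fact a) * / y ^ a) by (field; lra).
    apply Rmult_le_compat_r; [left; apply Rinv_0_lt_compat; lra |].
    apply Rmult_le_compat_r; lra.
  - apply Rmult_le_compat_l; [apply Rmult_le_pos; [lra | apply Rabs_pos] | exact Hyd].
Qed.

End DerivativeChain.

(* (t - 1/n)^2 + y^2 = 1/n^2  <->  y^2 = 2t/n - t^2 *)
Definition circle_height (n : nat) (t : R) : R := sqrt (2 * t / INR n - t ^ 2).

Lemma circle_height_radicand_pos (n : nat) (t : R) :
  (1 <= n)%nat -> 0 < t -> INR n * t < 2 -> 0 < 2 * t / INR n - t ^ 2.
Proof.
  intros Hn Ht Hnt. assert (Hn1 : 1 <= INR n) by (apply (le_INR 1); exact Hn).
  replace (2 * t / INR n - t ^ 2) with (t * (2 - INR n * t) / INR n) by (field; lra).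
  apply Rdiv_lt_0_compat; [apply Rmult_lt_0_compat |]; lra.
Qed.

Lemma circle_height_on_circle (n : nat) (t : R) :
  (1 <= n)%nat -> 0 < t -> INR n * t < 2 -> circle_C n (t, circle_height n t).
Proof.
  intros Hn Ht Hnt. assert (Hn1 : 1 <= INR n) by (apply (le_INR 1); exact Hn).
  unfold circle_C, circle_height. simpl fst; simpl snd.
  rewrite pow2_sqrt by (left; apply circle_height_radicand_pos; auto).
  field. lra.
Qed.

Lemma circle_height_le (n : nat) (t : R) :
  (1 <= n)%nat -> 0 < t -> circle_height n t <= sqrt (2 * t).
Proof.
  intros Hn Ht. assert (Hn1 : 1 <= INR n) by (apply (le_INR 1); exact Hn).
  apply sqrt_le_1_alt.
  assert (2 * t / INR n <= 2 * t).
  { apply Rle_div_l; [lra |]. pose proof (Rmult_le_compat_l (2 * t) 1 (INR n)). nra. }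
  pose proof (pow2_ge_0 t). lra.
Qed.

Lemma circle_height_decreasing (n : nat) (t : R) :
  (1 <= n)%nat -> 0 < t -> INR (S n) * t < 2 -> circle_height (S n) t < circle_height n t.
Proof.
  intros Hn Ht Hnt. assert (Hn1 : 1 <= INR n) by (apply (le_INR 1); exact Hn).
  apply sqrt_lt_1_alt. split.
  - left. apply circle_height_radicand_pos; [lia | exact Ht | exact Hnt].
  - rewrite S_INR.
    assert (2 * t / (INR n + 1) < 2 * t / INR n); [| lra].
    apply Rmult_lt_compat_l; [lra |]. apply Rinv_lt_contravar; nra.
Qed.

Lemma hawaiian_roots_on_vertical_line (f : R * R -> R) (t : R) (N : nat) :
  (forall p, hawaiian p -> f p = 0) -> 0 < t -> INR N * t < 2 ->
  has_roots (fun s => f (t, s)) N 0 (sqrt (2 * t)).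
Proof.
  intros Hvan Ht HN.
  assert (Hsmall : forall k, (k <= N)%nat -> INR k * t < 2).
  { intros k Hk. apply Rle_lt_trans with (INR N * t); [| exact HN].
    apply Rmult_le_compat_r; [lra | apply le_INR, Hk]. }
  destruct N as [|N]; [exact I |].
  apply (has_roots_of_decreasing _ (fun k => circle_height k t)).
  - intros k Hk. split; [apply circle_height_le; auto; lia |].
    apply Hvan. exists k. split; [lia |].
    apply circle_height_on_circle; auto; [lia | apply Hsmall; lia].
  - intros k Hk. apply circle_height_decreasing; auto; [lia | apply Hsmall; lia].
  - apply sqrt_lt_R0, circle_height_radicand_pos; auto. lia.
Qed.

Definition axis_chain (f : R * R -> R) (i : bool) (w : list bool) (p : R * R) :
  nat -> R -> R :=
  fun j => line (pdw (repeat i j ++ w) f) i p.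

Lemma axis_chain_ex_derive (f : R * R -> R) (i : bool) (w : list bool) (p : R * R) :
  smooth2 f -> forall j x, ex_derive (axis_chain f i w p j) x.
Proof.
  intros Hf j x. destruct i.
  - exact (proj2 (Hf _) true (fst p, x)).
  - exact (proj2 (Hf _) false (x, snd p)).
Qed.

Lemma axis_chain_Derive (f : R * R -> R) (i : bool) (w : list bool) (p : R * R) :
  forall j x, Derive (axis_chain f i w p j) x = axis_chain f i w p (S j) x.
Proof.
  destruct i; reflexivity.
Qed.

Lemma hawaiian_partial_y_rapid_decay (f : R * R -> R) (b n : nat) :
  smooth2 f -> (forall p, hawaiian p -> f p = 0) ->
  exists C eps, 0 < eps /\ forall t, 0 < t < eps -> Rabs (partial 0 b f (t, 0)) <= C * t ^ n.
Proof.
  intros Hf Hvan. set (N := (b + 2 * n)%nat).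
  destruct (continuous_locally_bounded _ (0, 0) (proj1 (Hf (repeat true N ++ nil)) (0, 0)))
    as [M [d [Hd HM]]].
  assert (HN : 0 < INR N + 1) by (pose proof (pos_INR N); lra).
  exists (M * 2 ^ n), (Rmin d (Rmin (d * d / 2) (/ (INR N + 1)))). split.
  { apply Rmin_glb_lt; [lra | apply Rmin_glb_lt; [nra | apply Rinv_0_lt_compat; lra]]. }
  intros t [Ht Hteps].
  assert (Htd : t < d /\ t < d * d / 2 /\ t < / (INR N + 1)).
  { revert Hteps. unfold Rmin. repeat destruct Rle_dec; lra. }
  destruct Htd as [Htd [Htd2 HtN]].
  assert (HNt : INR N * t < 2).
  { pose proof (Rmult_lt_compat_l _ _ _ HN HtN) as H. rewrite Rinv_r in H; nra. }
  assert (HD : sqrt (2 * t) < d).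
  { rewrite <- (sqrt_square d) by lra. apply sqrt_lt_1_alt. lra. }
  set (h := axis_chain f true nil (t, 0)).
  assert (Hroots : has_roots (h b) (2 * n) 0 (sqrt (2 * t))).
  { apply (has_roots_chain _ (axis_chain_ex_derive f true nil (t, 0) Hf)
             (axis_chain_Derive f true nil (t, 0))).
    apply hawaiian_roots_on_vertical_line; auto. }
  pose proof (chain_bound_from_roots _ (axis_chain_ex_derive f true nil (t, 0) Hf)
                (axis_chain_Derive f true nil (t, 0)) 0 (sqrt (2 * t)) M (2 * n) b)
    as Hbound.
  replace (M * 2 ^ n * t ^ n) with (M * (sqrt (2 * t) - 0) ^ (2 * n)).
  2: { rewrite Rminus_0_r, pow_mult, pow2_sqrt by lra. rewrite Rpow_mult_distr. ring. }
  unfold partial. simpl. rewrite <- (app_nil_r (repeat true b)).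
  apply Hbound; [| exact Hroots | pose proof (sqrt_pos (2 * t)); lra].
  intros s Hs. apply HM; simpl; rewrite Rminus_0_r, Rabs_pos_eq; lra.
Qed.

Theorem theorem4 (f : R * R -> R) (Hf : smooth2 f)
  (Hvan : forall p, hawaiian p -> f p = 0) :
  forall a1 a2 : nat, partial a1 a2 f (0, 0) = 0.
Proof.
  intros a1 a2.
  apply (chain_flat_at_0 (axis_chain f false (repeat true a2) (0, 0))).
  - apply axis_chain_ex_derive, Hf.
  - apply axis_chain_Derive.
  - intros n. apply hawaiian_partial_y_rapid_decay; assumption.
Qed.
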